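(* Let $\Delta$ be a smooth convex polygon with more than four edges. (i) If $e$ and $e'$ are parallel edges, then there is an edge, different from $e$ and $e'$ and not adjacent to $e$, which can be blown down. (ii) If $e,e',e''$ are consecutive adjacent edges with outward conormals $\alpha,\alpha',\alpha''$, and $\alpha'$ is not a positive linear combination of $\alpha$ and $\alpha''$, then there is an edge different from $e,e',e''$ which can be blown down.
   Context: A smooth polygon is a convex polygon $\bigcap_i\{x\in(\mathbb R^2)^*\mid\langle\eta_i,x\rangle\le\kappa_i\}$ whose primitive outward conormals at each vertex form a basis of $\mathbb Z^2$. An edge can be blown down if the polygon is the blowup of a smooth polygon at a vertex with that edge as exceptional divisor; for smooth polygons this holds exactly when the outward conormal of the edge equals the sum of the outward conormals of the two adjacent edges. (Blowup at a vertex $F_1\cap F_2$: intersect with $\{\langle\eta_1+\eta_2,x\rangle\le\kappa_1+\kappa_2-\epsilon\}$, $\epsilon>0$ small.) *)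

(* polygons live in (R^2)^* = R * R for R : realType. *)
From HB Require Import structures.
From mathcomp Require Import all_boot all_order all_algebra.
From mathcomp Require Import reals.
Set Implicit Arguments. Unset Strict Implicit. Unset Printing Implicit Defensive.
Import Order.TTheory GRing.Theory Num.Theory.
Local Open Scope ring_scope.

Definition zvadd (u v : int * int) : int * int := (u.1 + v.1, u.2 + v.2).

Definition primitive (v : int * int) : Prop :=
  forall (k : int) (w : int * int), v = (k * w.1, k * w.2) -> k = 1 \/ k = -1.

Definition Zbasis (u v : int * int) : Prop :=
  forall z : int * int, exists! c : int * int,
    z = (c.1 * u.1 + c.2 * v.1, c.1 * u.2 + c.2 * v.2).

Section Polygons.
Variable R : realType.

Definition pairing (eta : int * int) (x : R * R) : R :=
  eta.1%:~R * x.1 + eta.2%:~R * x.2.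

Definition in_poly n (eta : 'I_n -> int * int) (kappa : 'I_n -> R) (x : R * R) : Prop :=
  forall i, pairing (eta i) x <= kappa i.

Definition facet n (eta : 'I_n -> int * int) (kappa : 'I_n -> R) (i : 'I_n) (x : R * R) : Prop :=
  in_poly eta kappa x /\ pairing (eta i) x = kappa i.

Definition bounded_poly n (eta : 'I_n -> int * int) (kappa : 'I_n -> R) : Prop :=
  exists M : R, forall x, in_poly eta kappa x -> `|x.1| <= M /\ `|x.2| <= M.

(* (n, eta, kappa) presents a smooth convex polygon whose edges are exactly
   the facets F_0, ..., F_{n-1}:
   - the conormals are pairwise distinct and primitive,
   - Delta is bounded (a convex polygon),
   - every facet F_i is a genuine edge (contains two distinct points),
   - at every vertex F_i \cap F_j (i <> j) the conormals form a Z-basis. *)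
Definition smooth_polygon n (eta : 'I_n -> int * int) (kappa : 'I_n -> R) : Prop :=
  [/\ injective eta,
      (forall i, primitive (eta i)),
      bounded_poly eta kappa,
      (forall i, exists x y, [/\ facet eta kappa i x, facet eta kappa i y & x <> y]) &
      (forall i j, i <> j -> (exists x, facet eta kappa i x /\ facet eta kappa j x) ->
         Zbasis (eta i) (eta j))].

Definition adjacent n (eta : 'I_n -> int * int) (kappa : 'I_n -> R) (i j : 'I_n) : Prop :=
  i <> j /\ exists x, facet eta kappa i x /\ facet eta kappa j x.

Definition parallel_edges n (eta : 'I_n -> int * int) (kappa : 'I_n -> R) (i j : 'I_n) : Prop :=
  i <> j /\ exists x y u w,
    [/\ [/\ facet eta kappa i x, facet eta kappa i y & x <> y],
        [/\ facet eta kappa j u, facet eta kappa j w & u <> w] &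
        (y.1 - x.1) * (w.2 - u.2) - (y.2 - x.2) * (w.1 - u.1) = 0].

(* Edge e of Delta can be blown down: Delta is the blowup of a smooth polygon
   Delta' at a vertex F'_a \cap F'_b, i.e.
   Delta = Delta' \cap { <eta'_a + eta'_b, x> <= kappa'_a + kappa'_b - eps },
   eps > 0 small (so that all edges of Delta' survive: Delta has exactly one
   more edge than Delta'), with e being the new (exceptional) edge. *)
Definition can_blow_down n (eta : 'I_n -> int * int) (kappa : 'I_n -> R) (e : 'I_n) : Prop :=
  exists (n' : nat) (eta' : 'I_n' -> int * int) (kappa' : 'I_n' -> R)
         (a b : 'I_n') (eps : R),
    [/\ [/\ smooth_polygon eta' kappa', adjacent eta' kappa' a b, 0 < eps & n = n'.+1],
        (forall x, in_poly eta kappa x <->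
           (in_poly eta' kappa' x /\
            pairing (zvadd (eta' a) (eta' b)) x <= kappa' a + kappa' b - eps)) &
        (forall x, facet eta kappa e x <->
           (in_poly eta kappa x /\
            pairing (zvadd (eta' a) (eta' b)) x = kappa' a + kappa' b - eps))].

Definition pos_comb (v u w : int * int) : Prop :=
  exists a b : R, [/\ 0 < a, 0 < b,
    v.1%:~R = a * u.1%:~R + b * w.1%:~R & v.2%:~R = a * u.2%:~R + b * w.2%:~R].

End Polygons.

From Pilot Require Import Defs.
From HB Require Import structures.
From mathcomp Require Import all_boot all_order all_algebra.
From mathcomp Require Import reals.
From mathcomp Require Import zify ring lra.
Set Implicit Arguments. Unset Strict Implicit. Unset Printing Implicit Defensive.
Import Order.TTheory GRing.Theory Num.Theory.
Local Open Scope ring_scope.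

(* Going around a smooth
   polygon counterclockwise, consecutive conormals have determinant 1, and no
   conormal lies strictly inside the cone spanned by the two conormals at a
   vertex, for its edge would otherwise shrink to that vertex.  An edge f with
   neighbours P and N can be blown down as soon as det P N = 1: then
   eta f = eta P + eta N, and dropping the inequality of f leaves a smooth
   polygon whose vertex F_P \cap F_N is cut off by F_f.

   The identity det w P + det w N = det P N * det w f (for det P f = det f N = 1)
   gives det P N = 1 whenever f maximizes det w over a suitable set of edges
   containing P and N.  In (i) the conormals of e and e' are opposite; we take
   w = eta e if some |det (eta e) (eta k)| is at least 2, and otherwise all
   conormals lie on three lines, which leaves room for at most four edges unless
   an edge next to e' can be blown down.  In (ii), det e e'' <= 0 puts every
   other conormal strictly on one side of eta e, and we take w = - eta e; if
   the maximum is 1, these conormals lie on one line and the edge preceding e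
   can be blown down. *)

Definition det (u v : int * int) : int := u.1 * v.2 - u.2 * v.1.

Definition negv (v : int * int) : int * int := (- v.1, - v.2).

Lemma detC u v : det u v = - det v u.
Proof. rewrite /det; ring. Qed.

Lemma detvv u : det u u = 0.
Proof. rewrite /det; ring. Qed.

Lemma det_negl u v : det (negv u) v = - det u v.
Proof. rewrite /det /negv /=; ring. Qed.

Lemma det_negr u v : det u (negv v) = - det u v.
Proof. rewrite /det /negv /=; ring. Qed.

Lemma mulz_eq1 (x y : int) : x * y = 1 -> y = 1 \/ y = -1.
Proof. move/intUnitRing.unitzPl; rewrite qualifE /=; by case/orP=> /eqP ->; auto. Qed.

Lemma ZbasisP u v : Zbasis u v <-> det u v = 1 \/ det u v = -1.
Proof.
split=> [Huv | hD z].
  case: (Huv (1, 0)) => [[c1 c2] [[/= h1 h2] _]].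
  case: (Huv (0, 1)) => [[d1 d2] [[/= h3 h4] _]].
  apply: (@mulz_eq1 (c1 * d2 - c2 * d1)).
  have -> : (c1 * d2 - c2 * d1) * det u v
      = (c1 * u.1 + c2 * v.1) * (d1 * u.2 + d2 * v.2)
        - (c1 * u.2 + c2 * v.2) * (d1 * u.1 + d2 * v.1) by rewrite /det; ring.
  by rewrite -h1 -h2 -h3 -h4; ring.
set D := det u v; have DD : D * D = 1 by rewrite /D; case: hD => ->.
have DDK a b : D * D * a = b -> a = b by rewrite DD mul1r.
(* the coordinates are given by Cramer's rule, since D^-1 = D *)
exists (D * det z v, D * det u z); split.
  by case: z => z1 z2 /=; congr pair; apply: DDK; rewrite /D /det /=; ring.
by move=> [c1 c2] /= ->; congr pair; apply/esym/DDK; rewrite /D /det /=; ring.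
Qed.

Lemma cramer u v w : det u v = 1 ->
  w = (det w v * u.1 + det u w * v.1, det w v * u.2 + det u w * v.2).
Proof.
move=> huv; have K a b : det u v * a = b -> a = b by rewrite huv mul1r.
by case: w => w1 w2; congr pair; apply: K; rewrite /det /=; ring.
Qed.

Lemma det_coord u v w z : det u v = 1 ->
  det w z = det w v * det u z - det u w * det z v.
Proof. by move=> huv; rewrite -[det w z]mulr1 -huv /det; ring. Qed.

Lemma det_coord_inj u v w z : det u v = 1 ->
  det w v = det z v -> det u w = det u z -> w = z.
Proof. by move=> huv h1 h2; rewrite (cramer w huv) (cramer z huv) h1 h2. Qed.

Lemma det_unit_of_eq u v w z : det u v = 1 -> det w z = 1 ->
  det u w = det u z -> det u z = 1 \/ det u z = -1.
Proof.
move=> huv hwz E; apply: (@mulz_eq1 (det w v - det z v)).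
by rewrite -[1]hwz (det_coord w z huv) E; ring.
Qed.

Lemma plucker_unimodular u v w z : det u v = 1 -> det v w = 1 ->
  det z u + det z w = det u w * det z v.
Proof.
move=> huv hvw.
have E : det u v * det z w + det v w * det z u = det u w * det z v.
  by rewrite /det; ring.
by rewrite huv hvw !mul1r addrC in E.
Qed.

Lemma primitive_neq0 v : primitive v -> v <> (0, 0).
Proof. by move=> Hv E; case: (Hv 0 (0, 0)); rewrite ?E /= ?mul0r. Qed.

Lemma primitive_pos_multiple v w (q : int) :
  primitive v -> v = (q * w.1, q * w.2) -> 0 < q -> q = 1.
Proof. by move=> Hv E q0; case: (Hv q w E) => // qm; move: q0; rewrite qm. Qed.

Lemma primitive_det0_unit u v w : primitive w -> det u v = 1 -> det u w = 0 ->
  det w v = 1 \/ det w v = -1.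
Proof.
move=> Hw huv h0; have Ew := cramer w huv; rewrite h0 !mul0r !addr0 in Ew.
exact: Hw Ew.
Qed.

Lemma primitive_det0_unitl u v w : primitive w -> det u v = 1 -> det w v = 0 ->
  det u w = 1 \/ det u w = -1.
Proof.
move=> Hw huv h0; have Ew := cramer w huv; rewrite h0 !mul0r !add0r in Ew.
exact: Hw Ew.
Qed.

Lemma primitive_det0 u v w : primitive w -> det u v = 1 -> det u w = 0 ->
  w = u \/ w = negv u.
Proof.
move=> Hw huv h0; have Ew := cramer w huv; rewrite h0 !mul0r !addr0 in Ew.
by case: (Hw _ _ Ew) => E; rewrite Ew E; [left | right];
  case: u {huv h0 Ew} => ? ? /=; congr pair; ring.
Qed.

Lemma sum_eq_mul1 (b M x y : int) : x + y = b * M ->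
  0 <= x < M -> 0 <= y <= M -> 0 < x + y -> b = 1.
Proof.
move=> hb /andP [x0 xM] /andP [y0 yM] xy.
have [b0|[->|b2]] : b <= 0 \/ b = 1 \/ 2 <= b by lia.
- have : b * M <= 0 by apply: mulr_le0_ge0; lia.
  lia.
- by [].
- have : 2 * M <= b * M by apply: ler_wpM2r; lia.
  lia.
Qed.

Lemma exists_notin n (s : seq 'I_n) : (size s < n)%N -> exists k, k \notin s.
Proof.
move=> hs; case: (pickP (fun k => k \notin s)) => [k hk | H]; first by exists k.
move: hs; rewrite ltnNge => /negP []; rewrite -[X in (X <= _)%N]card_ord.
apply: leq_trans (card_size s); apply: subset_leq_card; apply/subsetP => x _.
by have := H x; rewrite /= => /negbFE.
Qed.

Lemma int_norm_ge1 (R : realType) (c : int) : c != 0 -> 1 <= `|c%:~R : R|.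
Proof. by move=> c0; rewrite -intr_norm ler1z; lia. Qed.

Lemma norm_shift_le (R : realType) (M a t c : R) :
  `|a| <= M -> `|a + t * c| <= M -> 1 <= `|c| -> 0 <= t -> t <= 2 * M.
Proof.
move=> ha hz hc t0.
have : `|t * c| <= 2 * M.
  by rewrite -[t * c](addKr a) (le_trans (ler_normD _ _)) // normrN; lra.
by rewrite normrM ger0_norm //; apply: le_trans; rewrite ler_peMr.
Qed.

Lemma pairing_shift (R : realType) (w u : int * int) (s : int) (x : R * R) (t : R) :
  pairing w (x.1 + t * (s * - u.2)%:~R, x.2 + t * (s * u.1)%:~R)
  = pairing w x + t * (s * det u w)%:~R.
Proof. by rewrite /pairing /det /= !intrM intrB !intrM intrN; ring. Qed.

Lemma pairing_lincomb (R : realType) (a b : int) u v (x : R * R) :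
  pairing (a * u.1 + b * v.1, a * u.2 + b * v.2) x
  = a%:~R * pairing u x + b%:~R * pairing v x.
Proof. by rewrite /pairing /= !intrD !intrM; ring. Qed.

Lemma pairing_zvadd (R : realType) u v (x : R * R) :
  pairing (zvadd u v) x = pairing u x + pairing v x.
Proof. by rewrite /pairing /zvadd /= !intrD; ring. Qed.

Lemma pairing_inj (R : realType) (u v : int * int) (y y' : R * R) : det u v != 0 ->
  pairing u y = pairing u y' -> pairing v y = pairing v y' -> y = y'.
Proof.
move=> hD h1 h2; have hD' : (det u v)%:~R != 0 :> R by rewrite intr_eq0.
have e1 : (det u v)%:~R * (y.1 - y'.1) = v.2%:~R * (pairing u y - pairing u y')
            - u.2%:~R * (pairing v y - pairing v y') :> R.
  by rewrite /pairing /det intrB !intrM; ring.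
have e2 : (det u v)%:~R * (y.2 - y'.2) = u.1%:~R * (pairing v y - pairing v y')
            - v.1%:~R * (pairing u y - pairing u y') :> R.
  by rewrite /pairing /det intrB !intrM; ring.
rewrite h1 h2 !subrr !mulr0 subrr in e1 e2.
move/eqP: e1; rewrite mulf_eq0 (negbTE hD') /= subr_eq0 => /eqP.
move/eqP: e2; rewrite mulf_eq0 (negbTE hD') /= subr_eq0 => /eqP.
by case: y {h1 h2} => ? ?; case: y' => ? ? /= -> ->.
Qed.

(* On the triangle s <= kP, t <= kN, s + t > kf, a linear form with a negative
   coefficient attains its supremum only on the open side s + t = kf. *)
Lemma linear_lt_on_triangle (R : realType) (a b s t kP kN kf c : R) :
  (a < 0 \/ b < 0) -> s <= kP -> t <= kN -> kf < s + t ->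
  a * kP + b * (kf - kP) <= c -> a * (kf - kN) + b * kN <= c -> a * s + b * t < c.
Proof.
move=> hab hs ht hst hp hq.
have [a0|a0] := lerP 0 a; have [b0|b0] := lerP 0 b.
- by case: hab; lra.
- have h1 : a * s <= a * kP by nra.
  have h2 : b * t < b * (kf - kP) by nra.
  lra.
- have h1 : b * t <= b * kN by nra.
  have h2 : a * s < a * (kf - kN) by nra.
  lra.
- have [ab|ab] := lerP a b.
  + have h1 : 0 <= (b - a) * (kN - t) by apply: mulr_ge0; lra.
    have h2 : 0 < a * (s + t - kf) * (-1) by nra.
    nra.
  + have h1 : 0 <= (a - b) * (kP - s) by apply: mulr_ge0; lra.
    have h2 : 0 < b * (s + t - kf) * (-1) by nra.
    nra.
Qed.

Lemma norm_le_of_between (R : realType) (s a b c : R) : a - c < s -> s <= b ->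
  `|s| <= `|a| + `|b| + `|c|.
Proof.
move=> h1 h2; rewrite ler_norml.
have : - `|a| <= a by rewrite lerNl -normrN ler_norm.
have := ler_norm b; have := ler_norm c.
have := normr_ge0 a; have := normr_ge0 b; have := normr_ge0 c.
by move=> *; apply/andP; split; lra.
Qed.

Lemma coord_norm_le (R : realType) (u v : int * int) : det u v = 1 ->
  exists K : R, forall (x : R * R) (S : R), `|pairing u x| <= S -> `|pairing v x| <= S ->
    `|x.1| <= K * S /\ `|x.2| <= K * S.
Proof.
move=> huv; exists (`|u.1%:~R| + `|u.2%:~R| + `|v.1%:~R| + `|v.2%:~R|) => x S hu hv.
have huvR : u.1%:~R * v.2%:~R - u.2%:~R * v.1%:~R = 1 :> R.
  by rewrite -intrM -intrM -intrB; move: huv; rewrite /det => ->.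
have DK (a b : R) : (u.1%:~R * v.2%:~R - u.2%:~R * v.1%:~R) * a = b -> a = b.
  by rewrite huvR mul1r.
have ex1 : x.1 = v.2%:~R * pairing u x - u.2%:~R * pairing v x.
  by apply: DK; rewrite /pairing; ring.
have ex2 : x.2 = u.1%:~R * pairing v x - v.1%:~R * pairing u x.
  by apply: DK; rewrite /pairing; ring.
have bnd (c1 c2 p q : R) : `|p| <= S -> `|q| <= S ->
    `|c1 * p - c2 * q| <= (`|c1| + `|c2|) * S.
  move=> hp hq; apply: (le_trans (ler_normB _ _)); rewrite !normrM mulrDl.
  by apply: lerD; apply: ler_wpM2l.
have S0 : 0 <= S by apply: le_trans hu.
have n0 (c : R) : 0 <= `|c| := normr_ge0 c.
split.
  rewrite ex1; apply: (le_trans (bnd _ _ _ _ hu hv)); apply: ler_wpM2r => //.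
  by have := n0 (u.1%:~R); have := n0 (v.1%:~R); lra.
rewrite ex2; apply: (le_trans (bnd _ _ _ _ hv hu)); apply: ler_wpM2r => //.
by have := n0 (u.2%:~R); have := n0 (v.2%:~R); lra.
Qed.

Lemma pairing_solve (R : realType) (u v : int * int) (a b : R) : det u v = 1 ->
  exists r : R * R, pairing u r = a /\ pairing v r = b.
Proof.
move=> huv; have huvR : u.1%:~R * v.2%:~R - u.2%:~R * v.1%:~R = 1 :> R.
  by rewrite -intrM -intrM -intrB; move: huv; rewrite /det => ->.
exists (a * v.2%:~R - b * u.2%:~R, b * u.1%:~R - a * v.1%:~R).
have DK (c d : R) : (u.1%:~R * v.2%:~R - u.2%:~R * v.1%:~R) * c = d -> c = d.
  by rewrite huvR mul1r.
by split; apply/esym/DK; rewrite /pairing /=; ring.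
Qed.

Lemma pos_comb_of_det (R : realType) x y z : det x y = 1 -> det y z = 1 ->
  0 < det x z -> pos_comb R y x z /\ pos_comb R y z x.
Proof.
move=> hxy hyz hB.
have Ez := cramer z hxy; rewrite (detC z) hyz in Ez.
set B := det x z in Ez hB; clearbody B.
have B0 : (0 : R) < B%:~R by rewrite ltr0z.
have coord (c : int * int -> int) : c z = - c x + B * c y ->
    (c y)%:~R = (B%:~R)^-1 * (c x)%:~R + (B%:~R)^-1 * (c z)%:~R :> R.
  by move=> ->; rewrite intrD intrN intrM; field; rewrite gt_eqF.
have e1 := coord (fun v => v.1) ltac:(by rewrite {1}Ez /=; ring).
have e2 := coord (fun v => v.2) ltac:(by rewrite {1}Ez /=; ring).
have Bi : (0 : R) < (B%:~R)^-1 by rewrite invr_gt0.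
split; exists (B%:~R)^-1, (B%:~R)^-1; split=> //.
- by rewrite e1 addrC.
- by rewrite e2 addrC.
Qed.

Lemma mulr_eq0_pair (R : realType) (a b z : R) : (a != 0) || (b != 0) ->
  a * z = 0 -> b * z = 0 -> z = 0.
Proof.
move=> ab /eqP az /eqP bz; apply/eqP; move: ab az bz; rewrite !mulf_eq0.
by case: (z == 0); rewrite ?orbF ?orbT // => /orP [] /negbTE -> //.
Qed.

Lemma parallel_normals_det0 (R : realType) (i1 i2 j1 j2 a b c d : R) :
  i1 * a + i2 * b = 0 -> j1 * c + j2 * d = 0 -> a * d - b * c = 0 ->
  (a != 0) || (b != 0) -> (c != 0) || (d != 0) -> i1 * j2 - i2 * j1 = 0.
Proof.
move=> Ei Ej X ab cd.
have Eic : i1 * c + i2 * d = 0.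
  apply: (mulr_eq0_pair ab).
    have -> : a * (i1 * c + i2 * d) = c * (i1 * a + i2 * b) + i2 * (a * d - b * c).
      by ring.
    by rewrite Ei X !mulr0 addr0.
  have -> : b * (i1 * c + i2 * d) = d * (i1 * a + i2 * b) - i1 * (a * d - b * c).
    by ring.
  by rewrite Ei X !mulr0 subr0.
apply: (mulr_eq0_pair cd).
  have -> : c * (i1 * j2 - i2 * j1) = j2 * (i1 * c + i2 * d) - i2 * (j1 * c + j2 * d).
    by ring.
  by rewrite Eic Ej !mulr0 subr0.
have -> : d * (i1 * j2 - i2 * j1) = i1 * (j1 * c + j2 * d) - j1 * (i1 * c + i2 * d).
  by ring.
by rewrite Eic Ej !mulr0 subr0.
Qed.

Lemma sub_neq0_pair (R : realType) (x y : R * R) : x <> y ->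
  (y.1 - x.1 != 0) || (y.2 - x.2 != 0).
Proof.
move=> xy; rewrite !subr_eq0; case: eqP => [e1|] //=; case: eqP => [e2|] //=.
by case: xy; move: e1 e2; case: x => ? ?; case: y => ? ? /= -> ->.
Qed.

Section SmoothPolygon.
Variables (R : realType) (n : nat) (eta : 'I_n -> int * int) (kappa : 'I_n -> R).
Hypothesis Hs : smooth_polygon eta kappa.

Local Notation dd i j := (det (eta i) (eta j)).
Local Notation adjacent := (adjacent eta kappa).

Lemma eta_inj : injective eta.
Proof. by case: Hs. Qed.

Lemma eta_primitive i : primitive (eta i).
Proof. by case: Hs. Qed.

Lemma adjacentC i j : adjacent i j -> adjacent j i.
Proof. by case=> ij [x [xi xj]]; split; [move=> E; apply: ij | exists x]. Qed.

Lemma adjacent_det i j : adjacent i j -> dd i j = 1 \/ dd i j = -1.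
Proof. by case: Hs => _ _ _ _ Hzb [ij xij]; apply/ZbasisP/Hzb. Qed.

(* Otherwise the facet F_k would be squeezed into the vertex x. *)
Lemma conormal_not_in_vertex_cone i j k x : facet eta kappa i x -> facet eta kappa j x ->
  0 < dd i j -> 0 < dd i k -> 0 < dd k j -> False.
Proof.
case: Hs => _ _ _ Hgen _ [Hx Hxi] [_ Hxj] Dij Dik Dkj.
case: (Hgen k) => y [y' [[Hy Hyk] [Hy' Hy'k] Hne]].
have lin z : (dd i j)%:~R * pairing (eta k) z =
   (dd k j)%:~R * pairing (eta i) z + (dd i k)%:~R * pairing (eta j) z :> R.
  by rewrite /pairing /det !intrB !intrM; ring.
have A0 : (0 : R) < (dd i j)%:~R by rewrite ltr0z.
have B0 : (0 : R) < (dd k j)%:~R by rewrite ltr0z.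
have C0 : (0 : R) < (dd i k)%:~R by rewrite ltr0z.
have tight z : in_poly eta kappa z -> pairing (eta k) z = kappa k ->
    pairing (eta i) z = kappa i /\ pairing (eta j) z = kappa j.
  move=> Hz Hzk; have L1 := lin z; have L2 := lin x.
  rewrite Hxi Hxj Hzk in L1 L2.
  have := Hz i; have := Hz j; have := Hx k.
  move: A0 B0 C0 L1 L2.
  set a := (dd i j)%:~R; set b := (dd k j)%:~R; set c := (dd i k)%:~R.
  set pk := pairing (eta k) x; set zi := pairing (eta i) z; set zj := pairing (eta j) z.
  by move=> *; split; nra.
have [t1 t2] := tight y Hy Hyk; have [t3 t4] := tight y' Hy' Hy'k.
by apply: Hne; apply: (@pairing_inj _ (eta i) (eta j)); rewrite ?gt_eqF ?t1 ?t2 ?t3 ?t4.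
Qed.

Lemma adjacent_vertex_cone i j k : adjacent i j -> dd i j = 1 ->
  0 < dd i k -> 0 < dd k j -> False.
Proof.
by move=> [_ [x [Hi Hj]]] h; apply: (conormal_not_in_vertex_cone Hi Hj); rewrite h.
Qed.

(* Walking along the edge F_i in direction s (-eta_i.2, eta_i.1) must leave the
   bounded polygon, so some conormal lies strictly ahead. *)
Lemma conormal_ahead i (s : int) : (s = 1 \/ s = -1) -> exists j, 0 < s * dd i j.
Proof.
case: Hs => _ _ [M HM] Hgen _ hs.
case: (Hgen i) => x [_ [[Hx _] _ _]].
case: (boolP [exists j, 0 < s * dd i j]) => [/existsP // | /existsPn Hbehind].
exfalso.
have M0 : 0 <= M by case: (HM x Hx) => h1 _; apply: le_trans (normr_ge0 _) h1.
pose t : R := 2 * M + 1.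
pose z := (x.1 + t * (s * - (eta i).2)%:~R, x.2 + t * (s * (eta i).1)%:~R).
have Hz : in_poly eta kappa z.
  move=> k; rewrite pairing_shift.
  have : (s * dd i k)%:~R <= 0 :> R by rewrite lerz0 leNgt Hbehind.
  have := Hx k; have : 0 <= t by rewrite /t; lra.
  by move=> *; nra.
have [[x1 x2] [z1 z2]] := (HM x Hx, HM z Hz).
have far (a : R) (c : int) : c != 0 -> `|a| <= M -> `|a + t * c%:~R| <= M -> False.
  move=> c0 ha hac; have := norm_shift_le ha hac (int_norm_ge1 R c0).
  by rewrite /t; lra.
have s0 : s != 0 by case: hs => ->.
rewrite /z /= in z1 z2.
have := primitive_neq0 (@eta_primitive i); case: (eta i) z1 z2 => a b /= z1 z2 ab0.
have [b0|a0] : b != 0 \/ a != 0.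
  by case: (eqVneq b 0) => [b0|]; [right; apply/eqP => a0; apply: ab0; rewrite a0 b0 | left].
- by apply: (far _ (s * - b) _ x1 z1); rewrite mulf_neq0 ?oppr_eq0.
- by apply: (far _ (s * a) _ x2 z2); rewrite mulf_neq0.
Qed.

Lemma neighbour_exists i (s : int) : (s = 1 \/ s = -1) ->
  exists j, adjacent i j /\ s * dd i j = 1.
Proof.
move=> hs; have [j0 Hj0] := conormal_ahead i hs.
case: Hs => _ _ _ Hgen Hzb; case: (Hgen i) => x [_ [[Hx Hxi] _ _]].
(* walk along F_i from x until the first inequality ahead becomes tight *)
pose r k : R := (kappa k - pairing (eta k) x) / (s * dd i k)%:~R.
case: (@arg_minP _ R _ j0 (fun k => 0 < s * dd i k) r Hj0) => j Pj Hmin.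
pose y := (x.1 + r j * (s * - (eta i).2)%:~R, x.2 + r j * (s * (eta i).1)%:~R).
have rK k : 0 < s * dd i k -> r k * (s * dd i k)%:~R = kappa k - pairing (eta k) x.
  by move=> hk; rewrite /r divfK // gt_eqF // ltr0z.
have r0 : 0 <= r j by rewrite /r divr_ge0 ?subr_ge0 ?(Hx j) // ltW // ltr0z.
have Hy : in_poly eta kappa y.
  move=> k; rewrite pairing_shift.
  have [hk|hk] := boolP (0 < s * dd i k).
    have := Hmin k hk; have := rK k hk.
    have : (0 : R) < (s * dd i k)%:~R by rewrite ltr0z.
    by move=> *; nra.
  have : (s * dd i k)%:~R <= 0 :> R by rewrite lerz0 leNgt.
  by have := Hx k; move=> *; nra.
have Fi : facet eta kappa i y by split=> //; rewrite pairing_shift detvv mulr0 mulr0 addr0.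
have Fj : facet eta kappa j y by split=> //; rewrite pairing_shift rK //; ring.
have ij : i <> j by move=> E; move: Pj; rewrite -E detvv mulr0.
exists j; split; first by split=> //; exists y.
have /ZbasisP := Hzb i j ij (ex_intro _ y (conj Fi Fj)).
by move: Pj; case: hs => -> Pj0 [] E; rewrite E in Pj0 *; lia.
Qed.

Lemma next_edge i : exists j, adjacent i j /\ dd i j = 1.
Proof. by have [j [aij]] := neighbour_exists i (or_introl erefl); rewrite mul1r; exists j. Qed.

Lemma prev_edge i : exists j, adjacent j i /\ dd j i = 1.
Proof.
have [j [/adjacentC aji]] := neighbour_exists i (or_intror erefl).
by rewrite mulN1r detC opprK; exists j.
Qed.

Lemma next_edge_uniq i j j' : adjacent i j -> adjacent i j' ->
  dd i j = 1 -> dd i j' = 1 -> j = j'.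
Proof.
move=> [_ [x [Hxi Hxj]]] [_ [y [Hyi Hyj']]] h1 h2.
have [hp|[hn|h0]] : 0 < dd j j' \/ dd j j' < 0 \/ dd j j' = 0 by lia.
- by case: (conormal_not_in_vertex_cone Hyi Hyj' (k := j)); rewrite ?h1 ?h2.
- case: (conormal_not_in_vertex_cone Hxi Hxj (k := j')); rewrite ?h1 ?h2 //.
  by rewrite detC; lia.
- by apply: eta_inj; apply: (det_coord_inj h1); rewrite ?h1 ?h2 // detvv detC h0.
Qed.

Lemma prev_edge_uniq i j j' : adjacent j i -> adjacent j' i ->
  dd j i = 1 -> dd j' i = 1 -> j = j'.
Proof.
move=> [_ [x [Hxj Hxi]]] [_ [y [Hyj' Hyi]]] h1 h2.
have [hp|[hn|h0]] : 0 < dd j j' \/ dd j j' < 0 \/ dd j j' = 0 by lia.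
- by case: (conormal_not_in_vertex_cone Hxj Hxi (k := j')); rewrite ?h1 ?h2.
- case: (conormal_not_in_vertex_cone Hyj' Hyi (k := j)); rewrite ?h1 ?h2 //.
  by rewrite detC; lia.
- by apply: eta_inj; apply: (det_coord_inj (u := eta j) (v := eta i)); rewrite ?h1 ?h2 ?h0 ?detvv.
Qed.

Lemma adjacent_chain_det e e' e'' : adjacent e e' -> adjacent e' e'' -> e <> e'' ->
  dd e e' = dd e' e''.
Proof.
move=> a1 a2 ne.
case: (adjacent_det a1) (adjacent_det a2) => h1 [] h2; rewrite h1 h2 //; case: ne.
  by apply: (prev_edge_uniq a1 (adjacentC a2)); rewrite // detC h2.
by apply: (next_edge_uniq (adjacentC a1) a2); rewrite // detC h1.
Qed.

Lemma parallel_edges_det0 i j : parallel_edges eta kappa i j -> dd i j = 0.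
Proof.
case=> _ [x [y [u [w [[[_ Hx] [_ Hy] xy] [[_ Hu] [_ Hw] uw] X]]]]].
apply/eqP; rewrite -(intr_eq0 R) /det intrB !intrM; apply/eqP.
apply: (parallel_normals_det0 _ _ X (sub_neq0_pair xy) (sub_neq0_pair uw)).
- by rewrite -[RHS](subrr (kappa i)) -{1}Hy -Hx /pairing; ring.
- by rewrite -[RHS](subrr (kappa j)) -{1}Hw -Hu /pairing; ring.
Qed.

Lemma det0_eta i k : dd i k = 0 -> eta k = eta i \/ eta k = negv (eta i).
Proof.
have [u [_ hu]] := next_edge i.
exact: (primitive_det0 (@eta_primitive k) hu).
Qed.

Lemma in_poly_lift f x : in_poly (eta \o lift f) (kappa \o lift f) x <->
  (forall k, k != f -> pairing (eta k) x <= kappa k).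
Proof.
split=> [H k kf | H j]; last by apply: H; rewrite eq_sym neq_lift.
by case: (unliftP f k) kf => [j -> _ | ->]; [apply: H | rewrite eqxx].
Qed.

Lemma in_poly_liftE f x : in_poly eta kappa x <->
  in_poly (eta \o lift f) (kappa \o lift f) x /\ pairing (eta f) x <= kappa f.
Proof.
rewrite in_poly_lift; split=> [H | [H1 H2] k]; first by split=> // k _; apply: H.
by case: (eqVneq k f) => [-> | kf] //; apply: H1.
Qed.

Section BlowDown.

Variables (P f N : 'I_n).
Hypotheses (aPf : adjacent P f) (afN : adjacent f N).
Hypotheses (hPf : dd P f = 1) (hfN : dd f N = 1) (hPN : dd P N = 1).

Lemma eta_blown : eta f = zvadd (eta P) (eta N).
Proof.
have := cramer (eta N) hPf; rewrite hPN (detC (eta N)) hfN /zvadd.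
by move: (eta f) (eta P) (eta N) => [a b] [c d] [e g] /= [-> ->]; congr pair; ring.
Qed.

Lemma blown_neq : [/\ P != f, N != f & P != N].
Proof.
by split; apply/eqP => E; [move: hPf | move: hfN | move: hPN]; rewrite E detvv.
Qed.

(* In the basis (eta P, eta N), eta k has coordinates (dd k N, dd P k). *)
Lemma conormal_outside_blown_cone k : k != P -> k != N -> k != f ->
  dd k N < 0 \/ dd P k < 0.
Proof.
move=> kP kN kf; have Ek := cramer (eta k) hPN.
case: (ltrP (dd k N) 0) => a0; first by left.
case: (ltrP (dd P k) 0) => b0; first by right.
exfalso; have [Pf Nf _] := blown_neq.
have [b00|bpos] : dd P k = 0 \/ 0 < dd P k by lia.
  have apos : 0 < dd k N.
    case: (ltrP 0 (dd k N)) => // h; have h0 : dd k N = 0 by lia.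
    have := primitive_neq0 (@eta_primitive k).
    by rewrite Ek h0 b00 !mul0r.
  rewrite b00 !mul0r !addr0 in Ek.
  have q1 := primitive_pos_multiple (@eta_primitive k) Ek apos.
  rewrite q1 !mul1r in Ek.
  by move/eqP: kP; apply; apply: eta_inj; rewrite Ek; case: (eta P).
have [a00|apos] : dd k N = 0 \/ 0 < dd k N by lia.
  rewrite a00 !mul0r !add0r in Ek.
  have q1 := primitive_pos_multiple (@eta_primitive k) Ek bpos.
  rewrite q1 !mul1r in Ek.
  by move/eqP: kN; apply; apply: eta_inj; rewrite Ek; case: (eta N).
have dkf : dd k f = dd k N - dd P k by rewrite eta_blown /det /zvadd /=; ring.
have dfk : dd f k = dd P k - dd k N by rewrite detC dkf opprB.
have [h|[h|h]] : dd P k < dd k N \/ dd k N < dd P k \/ dd k N = dd P k by lia.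
- by apply: (adjacent_vertex_cone aPf hPf (k := k)); rewrite ?dkf; lia.
- by apply: (adjacent_vertex_cone afN hfN (k := k)); rewrite ?dfk; lia.
- have Ek' : eta k = (dd k N * (eta f).1, dd k N * (eta f).2).
    by rewrite {1}Ek eta_blown -h /zvadd /=; congr pair; ring.
  have q1 := primitive_pos_multiple (@eta_primitive k) Ek' apos.
  rewrite q1 !mul1r in Ek'.
  by move/eqP: kf; apply; apply: eta_inj; rewrite Ek'; case: (eta f).
Qed.

Lemma blown_cut_strict k (x : R * R) : k != P -> k != N -> k != f ->
  pairing (eta P) x <= kappa P -> pairing (eta N) x <= kappa N ->
  kappa f < pairing (eta P) x + pairing (eta N) x -> pairing (eta k) x < kappa k.
Proof.
move=> kP kN kf hP hN hf.
case: aPf => _ [p [[Hp HpP] [_ Hpf]]]; case: afN => _ [q [[Hq Hqf] [_ HqN]]].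
have lin y : pairing (eta k) y
    = (dd k N)%:~R * pairing (eta P) y + (dd P k)%:~R * pairing (eta N) y.
  by rewrite {1}(cramer (eta k) hPN) pairing_lincomb.
have pf y : pairing (eta f) y = pairing (eta P) y + pairing (eta N) y.
  by rewrite eta_blown pairing_zvadd.
have hp := Hp k; rewrite lin HpP in hp.
have hq := Hq k; rewrite lin HqN in hq.
have pNp : pairing (eta N) p = kappa f - kappa P by rewrite -Hpf pf HpP; ring.
have pPq : pairing (eta P) q = kappa f - kappa N by rewrite -Hqf pf HqN; ring.
rewrite pNp in hp; rewrite pPq in hq; rewrite lin.
apply: linear_lt_on_triangle hP hN hf hp hq.
by case: (conormal_outside_blown_cone kP kN kf) => h; [left | right]; rewrite ltrz0.
Qed.

Lemma blown_kappa_lt : kappa f < kappa P + kappa N.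
Proof.
have pf y : pairing (eta f) y = pairing (eta P) y + pairing (eta N) y.
  by rewrite eta_blown pairing_zvadd.
case: aPf => _ [p [[Hp HpP] [_ Hpf]]].
have le_f : kappa f <= kappa P + kappa N by have := Hp N; rewrite -Hpf pf HpP; lra.
rewrite lt_neqAle le_f andbT; apply/eqP => E.
(* otherwise F_f would be the single point F_P \cap F_N *)
case: Hs => _ _ _ Hgen _; case: (Hgen f) => y [y' [[Hy Hyf] [Hy' Hy'f] Hne]].
have tight z : in_poly eta kappa z -> pairing (eta f) z = kappa f ->
    pairing (eta P) z = kappa P /\ pairing (eta N) z = kappa N.
  by move=> Hz; rewrite pf E; have := Hz P; have := Hz N; move=> *; split; lra.
have [t1 t2] := tight y Hy Hyf; have [t3 t4] := tight y' Hy' Hy'f.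
by apply: Hne; apply: (@pairing_inj _ (eta P) (eta N)); rewrite ?hPN ?t1 ?t2 ?t3 ?t4.
Qed.

Lemma blown_removed_bounded : bounded_poly (eta \o lift f) (kappa \o lift f).
Proof.
case: Hs => _ _ [M HM] _ _; have [Pf Nf _] := blown_neq.
pose S := `|kappa f| + `|kappa P| + `|kappa N|.
have [K bnd] := coord_norm_le R hPN.
exists (Num.max M (K * S)) => x Hx.
have [Hxf|Hxf] := lerP (pairing (eta f) x) (kappa f).
  have [h1 h2] := HM x ((in_poly_liftE f x).2 (conj Hx Hxf)).
  by rewrite !le_max h1 h2.
move/in_poly_lift: Hx => Hx; have hP := Hx P Pf; have hN := Hx N Nf.
rewrite eta_blown pairing_zvadd in Hxf.
have bP : `|pairing (eta P) x| <= S.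
  have : kappa f - kappa N < pairing (eta P) x by lra.
  by move/norm_le_of_between/(_ hP); rewrite /S; lra.
have bN : `|pairing (eta N) x| <= S.
  have : kappa f - kappa P < pairing (eta N) x by lra.
  by move/norm_le_of_between/(_ hN); rewrite /S; lra.
by have [h1 h2] := bnd x S bP bN; rewrite !le_max h1 h2 !orbT.
Qed.

Lemma blown_removed_smooth : smooth_polygon (eta \o lift f) (kappa \o lift f).
Proof.
case: Hs => Hinj Hprim _ Hgen Hzb; have [Pf Nf _] := blown_neq.
split=> [u v /Hinj /lift_inj // | j | | j | i j ij [x [[Hx Hxi] [_ Hxj]]]].
- exact: Hprim.
- exact: blown_removed_bounded.
- case: (Hgen (lift f j)) => y [y' [[Hy Hyj] [Hy' Hy'j] Hne]].
  exists y, y'; split=> //; split=> //; apply/in_poly_lift => k _; [exact: Hy | exact: Hy'].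
have [Hxf|Hxf] := lerP (pairing (eta f) x) (kappa f).
  have HxD := (in_poly_liftE f x).2 (conj Hx Hxf).
  by apply: Hzb; [move/lift_inj | exists x].
(* a vertex cut off by F_f lies only on F_P and F_N *)
move/in_poly_lift: Hx => Hx; rewrite eta_blown pairing_zvadd in Hxf.
have tight k : k != f -> pairing (eta k) x = kappa k -> k = P \/ k = N.
  move=> kf hk; case: (eqVneq k P) => [-> | kP]; first by left.
  case: (eqVneq k N) => [-> | kN]; first by right.
  by have := blown_cut_strict kP kN kf (Hx P Pf) (Hx N Nf) Hxf; rewrite hk ltxx.
have nf j' : lift f j' != f by rewrite eq_sym neq_lift.
apply/ZbasisP; rewrite /=.
have [iP|iN] := tight _ (nf i) Hxi; have [jP|jN] := tight _ (nf j) Hxj.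
- by case: ij; apply: (@lift_inj _ f); rewrite iP jP.
- by rewrite iP jN; left.
- by rewrite iN jP detC hPN; right.
- by case: ij; apply: (@lift_inj _ f); rewrite iN jN.
Qed.

Lemma blown_removed_adjacent a b : lift f a = P -> lift f b = N ->
  Defs.adjacent (eta \o lift f) (kappa \o lift f) a b.
Proof.
move=> Pa Nb; have [Pf Nf PN] := blown_neq.
split=> [ab | ]; first by move: PN; rewrite -Pa -Nb ab eqxx.
have [r [rP rN]] := pairing_solve (kappa P) (kappa N) hPN.
have rin : in_poly (eta \o lift f) (kappa \o lift f) r.
  apply/in_poly_lift => k kf.
  case: (eqVneq k P) => [-> | kP]; first by rewrite rP.
  case: (eqVneq k N) => [-> | kN]; first by rewrite rN.
  by apply/ltW/blown_cut_strict; rewrite ?rP ?rN ?blown_kappa_lt.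
by exists r; rewrite /facet /= Pa Nb.
Qed.

Lemma can_blow_down_of_neighbours : can_blow_down eta kappa f.
Proof.
have [Pf Nf _] := blown_neq.
case: (unliftP f P) Pf => [a Pa _ | ->]; last by rewrite eqxx.
case: (unliftP f N) Nf => [b Nb _ | ->]; last by rewrite eqxx.
exists n.-1, (eta \o lift f), (kappa \o lift f), a, b, (kappa P + kappa N - kappa f).
rewrite /= -Pa -Nb -eta_blown.
have -> : kappa P + kappa N - (kappa P + kappa N - kappa f) = kappa f by ring.
split=> //; last exact: in_poly_liftE.
split.
- exact: blown_removed_smooth.
- exact: blown_removed_adjacent.
- by rewrite subr_gt0 blown_kappa_lt.
- by rewrite prednK // (leq_ltn_trans (leq0n _) (ltn_ord f)).
Qed.

End BlowDown.

Lemma can_blow_down_of_max (w : int * int) P f N :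
  adjacent P f -> adjacent f N -> dd P f = 1 -> dd f N = 1 ->
  0 <= det w (eta P) < det w (eta f) -> 0 <= det w (eta N) <= det w (eta f) ->
  0 < det w (eta P) + det w (eta N) -> can_blow_down eta kappa f.
Proof.
move=> aPf afN hPf hfN hP hN hPN.
have hsum := plucker_unimodular w hPf hfN.
exact: (can_blow_down_of_neighbours aPf afN hPf hfN (sum_eq_mul1 hsum hP hN hPN)).
Qed.

Section ParallelEdges.

Variables e e' : 'I_n.
Hypothesis He' : eta e' = negv (eta e).

Lemma det_opposite k : dd e' k = - dd e k.
Proof. by rewrite He' det_negl. Qed.

Lemma det_e_opposite : dd e e' = 0.
Proof. by rewrite He' det_negr detvv oppr0. Qed.

Lemma parallel_blow_down_far : (exists k, 2 <= dd e k) ->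
  exists f, [/\ f <> e, f <> e', 2 <= dd e f & can_blow_down eta kappa f].
Proof.
move=> [k0 hk0].
case: (@arg_maxP _ int _ e xpredT (fun k => dd e k) erefl) => f _ Hmax.
have Hm k : dd e k <= dd e f := Hmax k erefl.
have M2 : 2 <= dd e f by apply: le_trans hk0 (Hm k0).
have [P [aPf hPf]] := prev_edge f; have [N [afN hfN]] := next_edge f.
have hN : 0 < dd e N.
  have [hn|[h0|//]] : dd e N < 0 \/ dd e N = 0 \/ 0 < dd e N by lia.
  - case: afN => _ [x [Hxf HxN]].
    case: (conormal_not_in_vertex_cone Hxf HxN (k := e')); rewrite ?hfN //.
      by rewrite He' det_negr detC opprK; lia.
    by rewrite det_opposite; lia.
  - by case: (det0_eta h0) => E; move: hfN; rewrite E ?det_negr detC ?opprK; lia.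
have hP : 0 < dd e P.
  have [hn|[h0|//]] : dd e P < 0 \/ dd e P = 0 \/ 0 < dd e P by lia.
  - by case: (adjacent_vertex_cone aPf hPf (k := e)); [rewrite detC|]; lia.
  - by case: (det0_eta h0) => E; move: hPf; rewrite E ?det_negl; lia.
have hPM : dd e P < dd e f.
  rewrite lt_neqAle Hm andbT; apply/eqP => E.
  have [u [_ hu]] := next_edge e.
  by case: (det_unit_of_eq hu hPf E) => h; rewrite h in M2.
exists f; split.
- by move=> E; move: M2; rewrite E detvv.
- by move=> E; move: M2; rewrite E He' det_negr detvv.
- by [].
- by apply: (can_blow_down_of_max (w := eta e) aPf afN hPf hfN); rewrite ?Hm //; lia.
Qed.

Section NearOpposite.
Hypotheses (Hle1 : forall k, dd e k <= 1) (Hge1 : forall k, -1 <= dd e k).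

Lemma parallel_prev_opposite w : adjacent w e' -> dd w e' = 1 ->
  (adjacent e w /\ dd e w = 1) \/ (~ adjacent e w /\ can_blow_down eta kappa w).
Proof.
move=> awe' hwe'; have hw : dd e w = 1 by move: hwe'; rewrite He' det_negr detC opprK.
have [P [aPw hPw]] := prev_edge w.
have hP := plucker_unimodular (eta e) hPw hwe'; rewrite det_e_opposite hw addr0 mulr1 in hP.
have [hP1|hP1] := eqVneq (dd e P) 1.
  right; split; last by apply: (can_blow_down_of_neighbours aPw awe' hPw hwe'); rewrite -hP.
  by move=> aew; move: hP1; rewrite (prev_edge_uniq aew aPw hw hPw) detvv.
left; have [hn|h0] : dd e P < 0 \/ dd e P = 0 by have := Hle1 P; lia.
  by case: (adjacent_vertex_cone aPw hPw (k := e)); rewrite ?hw // detC; lia.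
case: (det0_eta h0) => [/eta_inj E | E]; first by rewrite -E.
by move: hPw; rewrite -He' in E; rewrite (eta_inj E) det_opposite hw.
Qed.

Lemma parallel_next_opposite v : adjacent e' v -> dd e' v = 1 ->
  (adjacent v e /\ dd v e = 1) \/ (~ adjacent e v /\ can_blow_down eta kappa v).
Proof.
move=> ae'v he'v; have hv : dd v e = 1 by move: he'v; rewrite det_opposite detC opprK.
have [N [avN hvN]] := next_edge v.
have hev : dd e v = -1 by rewrite detC hv.
have hN := plucker_unimodular (eta e) he'v hvN; rewrite det_e_opposite add0r hev mulrN1 in hN.
have [hN1|hN1] := eqVneq (dd e' N) 1.
  right; split; last exact: (can_blow_down_of_neighbours ae'v avN he'v hvN).
  move=> /adjacentC ave; move: hN1.
  by rewrite -(next_edge_uniq ave avN hv hvN) He' det_negl detvv.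
left; have [hp|h0] : 0 < dd e N \/ dd e N = 0 by have := Hge1 N; move: hN; lia.
  by case: (adjacent_vertex_cone avN hvN (k := e)); rewrite ?hv.
case: (det0_eta h0) => [/eta_inj E | E]; first by rewrite -E.
by move: hvN; rewrite -He' in E; rewrite (eta_inj E) detC he'v.
Qed.

Lemma parallel_four_edges w v : adjacent e w -> dd e w = 1 -> adjacent w e' -> dd w e' = 1 ->
  adjacent e' v -> dd e' v = 1 -> adjacent v e -> dd v e = 1 ->
  forall k, k \in [:: e; e'; w; v].
Proof.
move=> aew hew awe' hwe' ae'v he'v ave hve k.
have [h0|[h1|h1]] : dd e k = 0 \/ dd e k = 1 \/ dd e k = -1.
  by have := Hle1 k; have := Hge1 k; lia.
- case: (det0_eta h0) => E; first by rewrite (eta_inj E) inE eqxx.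
  by rewrite -He' in E; rewrite (eta_inj E) !inE eqxx orbT.
- have hke' : dd k e' = 1 by rewrite He' det_negr detC opprK.
  have [g|[g|g]] : 0 < dd w k \/ dd w k < 0 \/ dd w k = 0 by lia.
  + by case: (adjacent_vertex_cone awe' hwe' (k := k)); rewrite ?hke'.
  + by case: (adjacent_vertex_cone aew hew (k := k)); rewrite ?h1 // detC; lia.
  + suff -> : k = w by rewrite !inE eqxx !orbT.
    by apply: eta_inj; apply: (det_coord_inj hew); rewrite ?h1 // detvv detC g oppr0.
- have hke : dd k e = 1 by rewrite detC h1 opprK.
  have [g|[g|g]] : 0 < dd v k \/ dd v k < 0 \/ dd v k = 0 by lia.
  + by case: (adjacent_vertex_cone ave hve (k := k)); rewrite ?hke.
  + case: (adjacent_vertex_cone ae'v he'v (k := k)); rewrite ?det_opposite ?h1 //.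
    by rewrite detC; lia.
  + suff -> : k = v by rewrite !inE eqxx !orbT.
    by apply: eta_inj; apply: (det_coord_inj hve); rewrite ?hke ?hve ?g ?detvv.
Qed.

Lemma parallel_blow_down_near : (4 < n)%N ->
  exists f, [/\ f <> e, f <> e', ~ adjacent e f & can_blow_down eta kappa f].
Proof.
move=> n5.
have [w [awe' hwe']] := prev_edge e'; have [v [ae'v he'v]] := next_edge e'.
case: (parallel_prev_opposite awe' hwe') => [[aew hew] | [naew bw]]; last first.
  by exists w; split=> // E; move: hwe'; rewrite E ?det_opposite ?detvv ?det_e_opposite.
case: (parallel_next_opposite ae'v he'v) => [[ave hve] | [naev bv]]; last first.
  by exists v; split=> // E; move: he'v; rewrite E ?det_opposite ?detvv ?det_e_opposite ?oppr0.
have [k] := exists_notin (n5 : (size [:: e; e'; w; v] < n)%N).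
by rewrite (parallel_four_edges aew hew awe' hwe' ae'v he'v ave hve).
Qed.

End NearOpposite.

End ParallelEdges.

Lemma parallel_edges_blow_down e e' : (4 < n)%N -> parallel_edges eta kappa e e' ->
  exists f, [/\ f <> e, f <> e', ~ adjacent e f & can_blow_down eta kappa f].
Proof.
move=> n5 par; have [ee' _] := par.
have He' : eta e' = negv (eta e).
  by case: (det0_eta (parallel_edges_det0 par)) => // /eta_inj E; case: ee'.
have He : eta e = negv (eta e') by rewrite He' /negv; case: (eta e) => ? ? /=; rewrite !opprK.
have nadj f : 2 <= det (eta e) (eta f) \/ 2 <= det (eta e') (eta f) ->
    ~ adjacent e f.
  by move=> h /adjacent_det; rewrite (det_opposite He') in h; lia.
have [/existsP [k hk] | /existsPn Hle] := boolP [exists k, 2 <= det (eta e) (eta k)].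
  have [f [fe fe' f2 bf]] := parallel_blow_down_far He' (ex_intro _ k hk).
  by exists f; split=> //; apply: nadj; left.
have [/existsP [k hk] | /existsPn Hge] := boolP [exists k, 2 <= det (eta e') (eta k)].
  have [f [fe' fe f2 bf]] := parallel_blow_down_far He (ex_intro _ k hk).
  by exists f; split=> //; apply: nadj; right.
apply: (parallel_blow_down_near He') => // k.
- by have := Hle k; lia.
- by have := Hge k; rewrite (det_opposite He'); lia.
Qed.

Section ConcaveCorner.

Variables e e' e'' : 'I_n.
Hypotheses (aee' : adjacent e e') (ae'e'' : adjacent e' e'').
Hypotheses (h1 : dd e e' = 1) (h2 : dd e' e'' = 1) (hB : dd e e'' <= 0).

Local Notation other k := (k \notin [:: e; e'; e'']).

Lemma other_neq k : other k -> [/\ k != e, k != e' & k != e''].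
Proof. by rewrite !inE !negb_or => /and3P. Qed.

(* [eta k] has coordinates [(dd k e', dd e k)] in the basis [(eta e, eta e')]. *)
Lemma corner_det k l : dd k l = dd k e' * dd e l - dd e k * dd l e'.
Proof. exact: det_coord. Qed.

Lemma corner_eq k l : dd k e' = dd l e' -> dd e k = dd e l -> k = l.
Proof. by move=> p q; apply: eta_inj; apply: (det_coord_inj h1 p q). Qed.

Lemma det_e''e' : dd e'' e' = -1.
Proof. by rewrite detC h2. Qed.

Lemma corner_others_above k : other k -> 0 < dd k e.
Proof.
move=> /other_neq [/eqP ke /eqP ke' /eqP ke''].
rewrite detC; case: (ltrP (dd e k) 0) => hq; first by lia.
exfalso.
have de'k : dd e' k = - dd k e' by rewrite corner_det detvv h1; ring.
have dke'' : dd k e'' = dd k e' * dd e e'' + dd e k by rewrite corner_det det_e''e'; ring.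
have [qp|q0] : 0 < dd e k \/ dd e k = 0 by lia.
- have [pp|[p0|pn]] : 0 < dd k e' \/ dd k e' = 0 \/ dd k e' < 0 by lia.
  + exact: (adjacent_vertex_cone aee' h1 qp pp).
  + case: (primitive_det0_unitl (@eta_primitive k) h1 p0) => hq1; last by lia.
    by apply: ke'; apply: corner_eq; rewrite ?p0 ?detvv ?hq1.
  + apply: (adjacent_vertex_cone ae'e'' h2 (k := k)); first by rewrite de'k; lia.
    rewrite dke''; have : 0 <= dd k e' * dd e e'' by apply: mulr_le0; lia.
    lia.
- case: (primitive_det0_unit (@eta_primitive k) h1 q0) => hp1.
    by apply: ke; apply: corner_eq; rewrite ?hp1 ?h1 ?q0 ?detvv.
  have [Bn|B0] : dd e e'' < 0 \/ dd e e'' = 0 by lia.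
    by apply: (adjacent_vertex_cone ae'e'' h2 (k := k)); rewrite ?de'k ?dke'' hp1 ?q0; lia.
  by apply: ke''; apply: corner_eq; rewrite ?hp1 ?det_e''e' ?q0 ?B0.
Qed.

Lemma corner_blow_down_large f : other f -> (forall k, other k -> dd k e <= dd f e) ->
  2 <= dd f e -> can_blow_down eta kappa f.
Proof.
move=> fS Hm M2; have [fe fe' fe''] := other_neq fS.
have [P [aPf hPf]] := prev_edge f; have [N [afN hfN]] := next_edge f.
have Pe' : P != e'.
  by apply: contraNneq fe'' => E; rewrite E in aPf hPf; rewrite (next_edge_uniq ae'e'' aPf h2 hPf).
have Ne' : N != e'.
  by apply: contraNneq fe => E; rewrite E in afN hfN; rewrite (prev_edge_uniq aee' afN h1 hfN).
have Ne'' : N != e''.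
  by apply: contraNneq fe' => E; rewrite E in afN hfN; rewrite (prev_edge_uniq ae'e'' afN h2 hfN).
have Ne : N != e by apply: contraTneq M2 => E; rewrite -E hfN.
have NS : other N by rewrite !inE !negb_or Ne Ne' Ne''.
have hN : 0 <= dd N e <= dd f e by rewrite ltW ?Hm ?corner_others_above.
have hP : 0 <= dd P e < dd f e.
  have [E | Pe''] := eqVneq P e''.
    rewrite E in hPf *; move: hPf; rewrite corner_det det_e''e' (detC (eta e)) => hPf.
    rewrite detC; have [B0|Bn] : dd e e'' = 0 \/ dd e e'' < 0 by lia.
      by rewrite B0; lia.
    have xn : dd f e' < 0.
      rewrite ltNge; apply/negP => x0.
      have : dd e e'' * dd f e' <= 0 by apply: mulr_le0_ge0; lia.
      lia.
    have : 0 <= dd e e'' * (dd f e' + 1) by apply: mulr_le0; lia.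
    by rewrite mulrDr mulr1; lia.
  have Pe : P != e by apply: contraTneq M2 => E; move: hPf; rewrite E detC; lia.
  have PS : other P by rewrite !inE !negb_or Pe Pe' Pe''.
  rewrite ltW ?corner_others_above //= lt_neqAle Hm // andbT.
  apply: contraTneq M2 => E.
  have := det_unit_of_eq h1 hPf; rewrite (detC _ (eta P)) (detC _ (eta f)) E => /(_ erefl).
  by rewrite detC; lia.
apply: (can_blow_down_of_max (w := negv (eta e)) aPf afN hPf hfN);
  rewrite !det_negl !(detC (eta e)) !opprK //.
by have := corner_others_above NS; move: hN hP; lia.
Qed.

Lemma corner_prev_neq_e'' k : other k -> dd k e = 1 ->
  adjacent e'' e -> dd e'' e = 1 -> False.
Proof.
move=> /other_neq [_ _ ke''] hk ae''e he''e.
have hB1 : dd e e'' = -1 by rewrite detC he''e.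
have hek : dd e k = -1 by rewrite detC hk.
have de''k : dd e'' k = 1 + dd k e' by rewrite corner_det det_e''e' hB1 hek; ring.
have dke'' : dd k e'' = - dd k e' - 1 by rewrite corner_det det_e''e' hB1 hek; ring.
have de'k : dd e' k = - dd k e' by rewrite corner_det detvv h1; ring.
have [p|[p|p]] : -1 < dd k e' \/ dd k e' < -1 \/ dd k e' = -1 by lia.
- by apply: (adjacent_vertex_cone ae''e he''e (k := k)); rewrite ?de''k ?hk; lia.
- by apply: (adjacent_vertex_cone ae'e'' h2 (k := k)); rewrite ?de'k ?dke''; lia.
- by move/eqP: ke''; apply; apply: corner_eq; rewrite ?p ?det_e''e' ?hek ?hB1.
Qed.

Lemma corner_prev2_neq_e'' g k : other k -> k != g ->
  dd g e = 1 -> dd k e = 1 -> adjacent e'' g -> dd e'' g = 1 -> adjacent g e -> False.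
Proof.
move=> /other_neq [_ _ ke''] kg hg hk ae''g he''g age.
have heg : dd e g = -1 by rewrite detC hg.
have hek : dd e k = -1 by rewrite detC hk.
have Bx : dd e e'' * dd g e' = 0.
  by move: he''g; rewrite corner_det det_e''e' heg; lia.
have dgk : dd g k = dd k e' - dd g e' by rewrite corner_det heg hek; ring.
have dkg : dd k g = dd g e' - dd k e' by rewrite corner_det heg hek; ring.
have de''k : dd e'' k = 1 - dd e e'' * dd k e' by rewrite corner_det det_e''e' hek; ring.
have dke'' : dd k e'' = dd k e' * dd e e'' - 1 by rewrite corner_det det_e''e' hek; ring.
have de'k : dd e' k = - dd k e' by rewrite corner_det detvv h1; ring.
have [x|[x|x]] : dd g e' < dd k e' \/ dd k e' < dd g e' \/ dd g e' = dd k e' by lia.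
- by apply: (adjacent_vertex_cone age hg (k := k)); rewrite ?dgk ?hk; lia.
- have [c|c] : 0 < 1 - dd e e'' * dd k e' \/ 1 <= dd e e'' * dd k e' by lia.
    by apply: (adjacent_vertex_cone ae''g he''g (k := k)); rewrite ?de''k ?dkg; lia.
  have pn : dd k e' < 0.
    rewrite ltNge; apply/negP => p0.
    have : dd e e'' * dd k e' <= 0 by apply: mulr_le0_ge0.
    lia.
  have [c'|c'] : 1 < dd e e'' * dd k e' \/ dd e e'' * dd k e' = 1 by lia.
    apply: (adjacent_vertex_cone ae'e'' h2 (k := k)); rewrite ?de'k ?dke''; lia.
  have [p1|p1] := mulz_eq1 c'; first by lia.
  rewrite p1 mulrN1 in c'; have hB1 : dd e e'' = -1 by lia.
  by move/eqP: ke''; apply; apply: corner_eq; rewrite ?p1 ?det_e''e' ?hek ?hB1.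
- by move/eqP: kg; apply; apply: corner_eq; rewrite ?x ?hek ?heg.
Qed.

Lemma corner_blow_down_unit : (4 < n)%N -> (forall k, other k -> dd k e = 1) ->
  exists f, other f /\ can_blow_down eta kappa f.
Proof.
move=> n5 hall; have [g [age hge]] := prev_edge e.
have [k hk] := exists_notin (n5 : (size [:: e; e'; e''; g] < n)%N).
have kS : other k by move: hk; rewrite !inE !negb_or => /and4P [-> -> ->].
have kg : k != g by move: hk; rewrite !inE !negb_or => /and4P [].
have ge : g != e by apply/eqP => E; move: hge; rewrite E detvv.
have ge' : g != e' by apply/eqP => E; move: hge; rewrite E detC h1.
have [E | ge''] := eqVneq g e''.
  by rewrite E in age hge; case: (corner_prev_neq_e'' kS (hall k kS) age hge).
have gS : other g by rewrite !inE !negb_or ge ge' ge''.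
have [P [aPg hPg]] := prev_edge g.
have Pe : P != e.
  by apply: contraNneq ge' => E; rewrite E in aPg hPg; rewrite (next_edge_uniq aee' aPg h1 hPg).
have Pe' : P != e'.
  by apply: contraNneq ge'' => E; rewrite E in aPg hPg; rewrite (next_edge_uniq ae'e'' aPg h2 hPg).
have [E | Pe''] := eqVneq P e''.
  rewrite E in aPg hPg.
  by case: (corner_prev2_neq_e'' kS kg (hall g gS) (hall k kS) aPg hPg age).
have PS : other P by rewrite !inE !negb_or Pe Pe' Pe''.
by exists g; split=> //; apply: (can_blow_down_of_neighbours aPg age hPg hge (hall P PS)).
Qed.

Lemma corner_blow_down : (4 < n)%N ->
  exists f, [/\ f <> e, f <> e', f <> e'' & can_blow_down eta kappa f].
Proof.
move=> n5.
have [k0 hk0] := exists_notin (ltnW n5 : (size [:: e; e'; e''] < n)%N).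
case: (@arg_maxP _ int _ k0 (fun k => other k) (fun k => dd k e) hk0) => f fS Hmax.
suff [g [gS bg]] : exists g, other g /\ can_blow_down eta kappa g.
  by have [/eqP ge /eqP ge' /eqP ge''] := other_neq gS; exists g.
have [M2|M1] := ltrP 1 (dd f e); first by exists f; split=> //; apply: corner_blow_down_large.
apply: corner_blow_down_unit => // k kS.
by have := Hmax k kS; have := corner_others_above kS; lia.
Qed.

End ConcaveCorner.

End SmoothPolygon.

Unset Implicit Arguments.

Theorem lemma2p46 (R : realType) (n : nat)
  (eta : 'I_n -> int * int) (kappa : 'I_n -> R) :
  smooth_polygon eta kappa -> (4 < n)%N ->
  (forall e e' : 'I_n, parallel_edges eta kappa e e' ->
     exists f : 'I_n, [/\ f <> e, f <> e', ~ adjacent eta kappa e f &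
                          can_blow_down eta kappa f]) /\
  (forall e e' e'' : 'I_n,
     adjacent eta kappa e e' -> adjacent eta kappa e' e'' -> e <> e'' ->
     ~ pos_comb R (eta e') (eta e) (eta e'') ->
     exists f : 'I_n, [/\ f <> e, f <> e', f <> e'' & can_blow_down eta kappa f]).
Proof.
move=> Hs n5; split=> [e e' | e e' e'' a1 a2 ne npc]; first exact: parallel_edges_blow_down.
have h12 := adjacent_chain_det Hs a1 a2 ne.
case: (adjacent_det Hs a1) => h1; rewrite h1 in h12.
  apply: (corner_blow_down Hs a1 a2 h1 (esym h12)) => //.
  rewrite leNgt; apply/negP => hB; apply: npc.
  exact: (@pos_comb_of_det R _ _ _ h1 (esym h12) hB).1.
have h1' : det (eta e') (eta e) = 1 by rewrite detC h1.
have h2' : det (eta e'') (eta e') = 1 by rewrite detC -h12.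
have hB : det (eta e'') (eta e) <= 0.
  rewrite leNgt; apply/negP => hB; apply: npc.
  exact: (@pos_comb_of_det R _ _ _ h2' h1' hB).2.
have [f [fe'' fe' fe bf]] := corner_blow_down Hs (adjacentC a2) (adjacentC a1) h2' h1' hB n5.
by exists f.
Qed.
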